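(* Let $C$ be a program of the outcome-based separation logic instance and $p,q$ separation-logic assertions. Then $\vDash[p]\,C\,[\mathsf{er}:q]$ is a manifest error, i.e. for every $\sigma\in\Sigma$ there is $\tau\in[\![C]\!](\sigma)$ with $\tau\vDash(\mathsf{er}:q\ast\mathsf{true})$, if and only if $\vDash\langle\mathsf{ok}:\mathsf{true}\rangle\,C\,\langle(\mathsf{er}:q\ast\mathsf{true})\oplus\top\rangle$.
   Context: Program states are $\Sigma=\mathcal{S}\times\mathcal{H}$: stacks $s\colon\mathsf{Var}\to\mathsf{Val}$ and heaps $h$, partial functions from positive naturals to $\mathsf{Val}\cup\{\bot\}$. Execution model: sets of tagged states $2^{\Sigma+\Sigma}$, with left injection $i_L$ marking erroneous states and right injection $i_R$ marking successful ones; $\mathsf{unit}(x)=\{i_R(x)\}$, $\mathsf{bind}(S,k)=\{i_L(x): i_L(x)\in S\}\cup\bigcup_{i_R(x)\in S}k(x)$, monoid $(\cup,\emptyset)$. A program $C$ (built from $\mathbb{0},\mathbb{1},;,+,{}^\star$ and heap-manipulating atomic commands) has semantics $[\![C]\!]\colon\Sigma\to2^{\Sigma+\Sigma}$ and $[\![C]\!]^\dagger(S)=\mathsf{bind}(S,[\![C]\!])$. Separation-logic assertions $p$ are satisfied by $(s,h)\in\Sigma$; $(s,h)\vDash q\ast\mathsf{true}$ iff $h=h_1\uplus h_2$ (disjoint domains) with $(s,h_1)\vDash q$. For a tagged state: $i_R(\sigma)\vDash(\mathsf{ok}:p)$ iff $\sigma\vDash p$, never $i_L(\sigma)\vDash(\mathsf{ok}:p)$;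 $i_L(\sigma)\vDash(\mathsf{er}:q)$ iff $\sigma\vDash q$, never $i_R(\sigma)\vDash(\mathsf{er}:q)$. A set $S$ satisfies such an atomic assertion iff $S\neq\emptyset$ and all its elements do; $S\vDash\top$ always; $S\vDash\varphi\oplus\psi$ iff $S=S_1\cup S_2$ with $S_1\vDash\varphi$, $S_2\vDash\psi$. $\vDash\langle\varphi\rangle C\langle\psi\rangle$ iff every $S$ with $S\vDash\varphi$ has $[\![C]\!]^\dagger(S)\vDash\psi$. *)

From Stdlib Require Import ZArith PArith.

Set Implicit Arguments.

Definition Var := nat.
Definition Val := Z.
Definition stack := Var -> Val.
(** heaps: partial functions from positive naturals to Val ∪ {⊥};
    [None] = not in domain, [Some None] = ⊥ (deallocated), [Some (Some v)] = v *)
Definition heap := positive -> option (option Val).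
Definition state : Type := (stack * heap)%type.

(** tagged states Σ+Σ : [inl] = i_L (error), [inr] = i_R (ok) *)
Definition tstate : Type := (state + state)%type.
Definition tset := tstate -> Prop.

Definition unit_ (x : state) : tset := fun t => t = inr x.
Definition bind (S : tset) (k : state -> tset) : tset :=
  fun t => (exists x, t = inl x /\ S (inl x)) \/ (exists x, S (inr x) /\ k x t).
Definition tunion (S1 S2 : tset) : tset := fun t => S1 t \/ S2 t.
Definition tempty : tset := fun _ => False.

Inductive expr :=
| ENum (n : Z) | EVar (x : Var) | EAdd (e1 e2 : expr) | ESub (e1 e2 : expr)
| EMul (e1 e2 : expr).

Inductive test :=
| BTrue | BFalse | BEq (e1 e2 : expr) | BLt (e1 e2 : expr)
| BNot (b : test) | BAnd (b1 b2 : test) | BOr (b1 b2 : test).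

Inductive atom :=
| AAssume (b : test)
| AAssign (x : Var) (e : expr)
| AAlloc (x : Var)
| AFree (e : expr)
| AStore (e1 e2 : expr)
| ALoad (x : Var) (e : expr)
| AError.

Inductive cmd :=
| CZero
| COne
| CSeq (C1 C2 : cmd)
| CPlus (C1 C2 : cmd)
| CStar (C : cmd)
| CAtom (a : atom).

Fixpoint eval (s : stack) (e : expr) : Val :=
  match e with
  | ENum n => n
  | EVar x => s x
  | EAdd e1 e2 => (eval s e1 + eval s e2)%Z
  | ESub e1 e2 => (eval s e1 - eval s e2)%Z
  | EMul e1 e2 => (eval s e1 * eval s e2)%Z
  end.

Fixpoint beval (s : stack) (b : test) : bool :=
  match b with
  | BTrue => true
  | BFalse => false
  | BEq e1 e2 => Z.eqb (eval s e1) (eval s e2)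
  | BLt e1 e2 => Z.ltb (eval s e1) (eval s e2)
  | BNot b => negb (beval s b)
  | BAnd b1 b2 => andb (beval s b1) (beval s b2)
  | BOr b1 b2 => orb (beval s b1) (beval s b2)
  end.

Definition supd (s : stack) (x : Var) (v : Val) : stack :=
  fun y => if Nat.eqb y x then v else s y.
Definition hupd (h : heap) (l : positive) (c : option (option Val)) : heap :=
  fun l' => if Pos.eqb l' l then c else h l'.

Definition loc_of (v : Val) : option positive :=
  match v with Zpos p => Some p | _ => None end.

Definition deref (s : stack) (h : heap) (e : expr) : option (positive * Val) :=
  match loc_of (eval s e) with
  | Some l => match h l with Some (Some v) => Some (l, v) | _ => None end
  | None => None
  end.

Definition atom_sem (a : atom) (σ : state) : tset :=
  let (s, h) := σ in
  match a with
  | AAssume b => if beval s b then unit_ σ else tempty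
  | AAssign x e => unit_ (supd s x (eval s e), h)
  | AAlloc x => fun t => exists (l : positive) (v : Val),
      h l = None /\ t = inr (supd s x (Zpos l), hupd h l (Some (Some v)))
  | AFree e => match deref s h e with
               | Some (l, _) => unit_ (s, hupd h l (Some None))
               | None => fun t => t = inl σ end
  | AStore e1 e2 => match deref s h e1 with
               | Some (l, _) => unit_ (s, hupd h l (Some (Some (eval s e2))))
               | None => fun t => t = inl σ end
  | ALoad x e => match deref s h e with
               | Some (_, v) => unit_ (supd s x v, h)
               | None => fun t => t = inl σ end
  | AError => fun t => t = inl σ
  end.

Fixpoint kpow (f : state -> tset) (n : nat) (σ : state) : tset :=
  match n with
  | O => unit_ σ
  | S n => bind (f σ) (kpow f n)
  end.

Fixpoint sem (C : cmd) (σ : state) : tset :=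
  match C with
  | CZero => tempty
  | COne => unit_ σ
  | CSeq C1 C2 => bind (sem C1 σ) (sem C2)
  | CPlus C1 C2 => tunion (sem C1 σ) (sem C2 σ)
  | CStar C => fun t => exists n, kpow (sem C) n σ t
  | CAtom a => atom_sem a σ
  end.

Definition sem_dag (C : cmd) (S : tset) : tset := bind S (sem C).

Definition sl_assert := state -> Prop.
Definition sl_true : sl_assert := fun _ => True.

Definition hdisjoint (h1 h2 : heap) : Prop :=
  forall l, h1 l = None \/ h2 l = None.
Definition hunion (h1 h2 : heap) : heap :=
  fun l => match h1 l with Some c => Some c | None => h2 l end.

Definition star_true (q : sl_assert) : sl_assert :=
  fun σ => exists h1 h2, hdisjoint h1 h2 /\ snd σ = hunion h1 h2 /\ q (fst σ, h1).

Inductive oassert :=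
| OTop
| OOk (p : sl_assert)
| OEr (q : sl_assert)
| OPlus (φ ψ : oassert).

Definition tsat (t : tstate) (φ : oassert) : Prop :=
  match φ, t with
  | OOk p, inr σ => p σ
  | OEr q, inl σ => q σ
  | _, _ => False
  end.

Fixpoint osat (S : tset) (φ : oassert) : Prop :=
  match φ with
  | OTop => True
  | OOk _ | OEr _ => (exists t, S t) /\ (forall t, S t -> tsat t φ)
  | OPlus φ1 φ2 => exists S1 S2, (forall t, S t <-> S1 t \/ S2 t)
                                 /\ osat S1 φ1 /\ osat S2 φ2
  end.

Definition ol_valid (φ : oassert) (C : cmd) (ψ : oassert) : Prop :=
  forall S, osat S φ -> osat (sem_dag C S) ψ.

Definition manifest_error (p : sl_assert) (C : cmd) (q : sl_assert) : Prop :=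
  forall σ : state, exists τ, sem C σ τ /\ tsat τ (OEr (star_true q)).

(** Satisfying [(er : r) ⊕ ⊤] just means containing at least one error
    outcome satisfying [r].  Any set satisfying [ok : true] contains some
    [i_R σ], so [[C]]†(S) contains all of [[C]](σ), which gives one direction;
    for the other, the singleton [{i_R σ}] satisfies [ok : true] and
    [[C]]†{i_R σ} = [[C]](σ). *)

Set Implicit Arguments.

Lemma bind_unitl (x : state) (k : state -> tset) (t : tstate) :
  bind (unit_ x) k t <-> k x t.
Proof.
  unfold bind, unit_; split.
  - intros [[y [_ Hy]] | [y [Hy Hk]]].
    + discriminate Hy.
    + injection Hy as ->; exact Hk.
  - intros Hk; right; exists x; split; [reflexivity | exact Hk].
Qed.

Lemma bind_inr {S : tset} {k : state -> tset} {x : state} {t : tstate} :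
  S (inr x) -> k x t -> bind S k t.
Proof. intros HS Hk; right; exists x; split; assumption. Qed.

Lemma osat_unit_ok_true (x : state) : osat (unit_ x) (OOk sl_true).
Proof.
  split.
  - exists (inr x); reflexivity.
  - intros t ->; exact I.
Qed.

Lemma osat_ok_inr (S : tset) (p : sl_assert) :
  osat S (OOk p) -> exists x, S (inr x) /\ p x.
Proof.
  intros [[[x | x] Hx] Hall]; specialize (Hall _ Hx).
  - contradiction.
  - exists x; split; assumption.
Qed.

Lemma osat_er_plus_top (S : tset) (q : sl_assert) :
  osat S (OPlus (OEr q) OTop) <-> exists t, S t /\ tsat t (OEr q).
Proof.
  split.
  - intros [S1 [S2 [HS [[[t Ht] Hall] _]]]].
    exists t; split.
    + apply HS; left; exact Ht.
    + exact (Hall t Ht).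
  - intros [t [Ht Hq]].
    exists (fun u => S u /\ tsat u (OEr q)), S.
    split; [| split; [split | exact I]].
    + intros u; split; [right; assumption | intros [[Hu _] | Hu]; exact Hu].
    + exists t; split; assumption.
    + intros u [_ Hu]; exact Hu.
Qed.

Theorem lemma6p7 (C : cmd) (p q : sl_assert) :
  manifest_error p C q <->
  ol_valid (OOk sl_true) C (OPlus (OEr (star_true q)) OTop).
Proof.
  split.
  - intros Hmanifest S HS.
    apply osat_er_plus_top.
    destruct (osat_ok_inr HS) as [x [Hx _]].
    destruct (Hmanifest x) as [t [Ht Hq]].
    exists t; split; [exact (bind_inr Hx Ht) | exact Hq].
  - intros Hvalid x.
    destruct (proj1 (osat_er_plus_top _ _) (Hvalid _ (osat_unit_ok_true x)))
      as [t [Ht Hq]].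
    exists t; split; [exact (proj1 (bind_unitl _ _ _) Ht) | exact Hq].
Qed.
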